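(* Let $w,w'\in S_n$ be such that $w$ covers $w'$ in the Bruhat order, with $w=w'\cdot(i,j)$ for positions $i<j$. Let $\alpha=\mathsf{code}(w)$ and $\alpha'=\mathsf{code}(w')$. Let $\underline{w}^{(I)}$ be the reduced word of $w'$ obtained by deleting the $I$-th letter of the row-reading word $\underline{w}$ of $w$, and let $\underline{w'}$ be the row-reading word of $w'$. Then there exists a sequence $f_1f_2\cdots f_p$ of moves, each a commutation or a braid move, transforming $\underline{w}^{(I)}$ into $\underline{w'}$, such that $$\#\{k: f_k \text{ is a braid move}\}=(\alpha_i-\alpha_i'-1)(j-i-1+\alpha_j-\alpha_i'),$$ $$\#\{k: f_k \text{ is a commutation}\}=(\alpha_i-\alpha_i'-1)\Big(\Big(\sum_{k=i}^{j-1}\alpha_k'\Big)-2(j-i-1+\alpha_j-\alpha_i')\Big).$$ Moreover, for any other sequence $g_1g_2\cdots g_q$ of commutations and braid moves transforming $\underline{w}^{(I)}$ into $\underline{w'}$, the number of braid moves among the $g_k$ has the same parity as the number of braid moves among the $f_k$, and likewise for the numbers of commutations.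
   Context: $S_n$ is generated by the simple reflections $s_m=(m,m+1)$, $m\in[n-1]$; permutations are written in one-line notation and $w\cdot(i,j)$ swaps the entries in positions $i$ and $j$. $\ell(w)$ is the number of inversions. The code of $w$ is $\alpha=(\alpha_1,\dots,\alpha_{n-1})$ with $\alpha_m=\#\{k>m: w(k)<w(m)\}$ (set $\alpha_n=0$). The row-reading word of $w$ is $\underline{w}=\underline{w}_1\underline{w}_2\cdots\underline{w}_{n-1}$, where $\underline{w}_m=s_{\alpha_m+m-1}s_{\alpha_m+m-2}\cdots s_{m+1}s_m$ if $\alpha_m>0$ and $\underline{w}_m$ is empty otherwise; it is a reduced word for $w$. $w$ covers $w'$ means $w'<w$ in the Bruhat order with $\ell(w')=\ell(w)-1$; equivalently $w=w'\cdot(i,j)$ with $i<j$, $w'(i)<w'(j)$ and no $k$ with $i<k<j$ and $w'(i)<w'(k)<w'(j)$. In this situation, writing $\underline{w}=s_{r_1}\cdots s_{r_\ell}$, there is a unique index $I$ such that $s_{r_1}\cdots\widehat{s_{r_I}}\cdots s_{r_\ell}$ is a reduced word for $w'$; this word is denoted $\underline{w}^{(I)}$. A commutation replaces two adjacent letters $s_as_b$ with $|a-b|\ge2$ by $s_bs_a$; a braid move replaces three adjacent letters $s_as_{a+1}s_a$ by $s_{a+1}s_as_{a+1}$ or vice versa. *)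

(* Conventions (all 0-indexed):
   - a permutation of S_n is its one-line notation: a seq nat w with
     perm_eq w (iota 0 n), i.e. values 0..n-1 (value v stands for v+1);
   - position k (0-based) stands for position k+1 of the paper;
   - letter m of a word stands for the simple reflection s_{m+1} = (m+1, m+2). *)
From mathcomp Require Import all_boot.
Set Implicit Arguments. Unset Strict Implicit. Unset Printing Implicit Defensive.

Definition is_perm (n : nat) (w : seq nat) : Prop := perm_eq w (iota 0 n).

(* w . (i,j) : swap the entries in positions i and j *)
Definition swap_pos (w : seq nat) (i j : nat) : seq nat :=
  set_nth 0 (set_nth 0 w i (nth 0 w j)) j (nth 0 w i).

(* the permutation s_{r_1} ... s_{r_l} of S_n, in one-line notation:
   id . s_{r_1} . ... . s_{r_l} *)
Definition word_perm (n : nat) (r : seq nat) : seq nat :=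
  foldl (fun w m => swap_pos w m m.+1) (iota 0 n) r.

Definition inversions (w : seq nat) : nat :=
  \sum_(a < size w) \sum_(b < size w | a < b) (nth 0 w b < nth 0 w a).

Definition reduced_word (n : nat) (r : seq nat) (w : seq nat) : Prop :=
  all (fun m => m.+1 < n) r /\ word_perm n r = w /\ size r = inversions w.

Definition code (w : seq nat) (k : nat) : nat :=
  count (fun l => nth 0 w l < nth 0 w k) (iota k.+1 (size w - k.+1)).

(* row-reading word: block for position m is s_{alpha_m+m-1} ... s_{m+1} s_m *)
Definition row_word (w : seq nat) : seq nat :=
  flatten [seq rev (iota m (code w m)) | m <- iota 0 (size w)].

Definition delete_at (I : nat) (r : seq nat) : seq nat :=
  take I r ++ drop I.+1 r.

Inductive move_kind := Commutation | Braid.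

Definition is_braid (k : move_kind) : bool := if k is Braid then true else false.
Definition is_comm (k : move_kind) : bool := if k is Commutation then true else false.

Definition move_step (k : move_kind) (u v : seq nat) : Prop :=
  match k with
  | Commutation => exists (p q : seq nat) (a b : nat),
      (b + 2 <= a \/ a + 2 <= b) /\ u = p ++ [:: a; b] ++ q /\ v = p ++ [:: b; a] ++ q
  | Braid => exists (p q : seq nat) (a : nat),
      (u = p ++ [:: a; a.+1; a] ++ q /\ v = p ++ [:: a.+1; a; a.+1] ++ q) \/
      (u = p ++ [:: a.+1; a; a.+1] ++ q /\ v = p ++ [:: a; a.+1; a] ++ q)
  end.

Inductive move_seq : seq nat -> seq move_kind -> seq nat -> Prop :=
  | move_seq_nil u : move_seq u [::] u
  | move_seq_cons k ks u v w : move_step k u v -> move_seq v ks w ->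
      move_seq u (k :: ks) w.

Definition n_braids (ks : seq move_kind) : nat := count is_braid ks.
Definition n_comms (ks : seq move_kind) : nat := count is_comm ks.

(* Write A = w'(i) < B = w'(j), and let d be the number of positions l > j with
   A < w'(l) < B.  Since w covers w', every position strictly between i and j holds a value
   below A or above B; hence the codes of w and w' agree outside i and j, while
   code w i = code w' i + 1 + d and code w' j = code w j + d.  The row words of w and w'
   therefore differ only in the blocks of positions i and j, and the only letter whose
   deletion yields a word for w' is the one leaving the letters c + d, ..., c + 1
   (c = i + code w' i) in front of the blocks of w' at positions i, ..., j - 1.  Each of these
   letters travels right through those blocks: it commutes past the block of a position
   holding a value below A, and crosses the block of a position holding a value above B by a
   single braid move that raises it by one.  The letter c + m arrives as
   j + code w j + m - 1, so together they complete the block of w' at j.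

   For the parities, read a word from the identity and record the pair of values exchanged by
   each letter.  A commutation swaps two adjacent disjoint pairs, and a braid move reverses
   three pairwise intersecting pairs, so the parity of the number of (lexicographic)
   inversions among disjoint, resp. intersecting, pairs changes exactly at the commutations,
   resp. braid moves. *)

From mathcomp Require Import all_boot all_order all_algebra.
From mathcomp Require Import zify.
Set Implicit Arguments. Unset Strict Implicit. Unset Printing Implicit Defensive.

(** * Adjacent transpositions *)

Definition swap_adj (s : seq nat) (a : nat) : seq nat := swap_pos s a a.+1.

Definition is_word (n : nat) (r : seq nat) : bool := all (fun m => m.+1 < n) r.

Lemma word_permE n r : word_perm n r = foldl swap_adj (iota 0 n) r.
Proof. by []. Qed.

Lemma nth_swap_pos s i j k : nth 0 (swap_pos s i j) k =
  if k == j then nth 0 s i else if k == i then nth 0 s j else nth 0 s k.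
Proof. by rewrite /swap_pos !nth_set_nth /= !nth_set_nth. Qed.

Lemma size_swap_pos s i j : i < size s -> j < size s -> size (swap_pos s i j) = size s.
Proof. by move=> hi hj; rewrite /swap_pos !size_set_nth; lia. Qed.

Lemma nth_swap_adj s a k : nth 0 (swap_adj s a) k =
  if k == a.+1 then nth 0 s a else if k == a then nth 0 s a.+1 else nth 0 s k.
Proof. exact: nth_swap_pos. Qed.

Lemma size_swap_adj s a : size (swap_adj s a) = maxn a.+2 (maxn a.+1 (size s)).
Proof. by rewrite /swap_adj /swap_pos !size_set_nth. Qed.

Lemma swap_adj_cat p y z q : swap_adj (p ++ y :: z :: q) (size p) = p ++ z :: y :: q.
Proof. by rewrite /swap_adj /swap_pos; elim: p => [|x p IHp] //=; rewrite IHp. Qed.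

Lemma split_adj (s : seq nat) a : a.+1 < size s ->
  exists p y z q, s = p ++ y :: z :: q /\ size p = a.
Proof.
move=> ha; exists (take a s), (nth 0 s a), (nth 0 s a.+1), (drop a.+2 s).
split; last by rewrite size_take; case: ifP; lia.
by rewrite -{1}(cat_take_drop a s) (drop_nth 0) 1?(drop_nth 0) //; lia.
Qed.

Lemma perm_swap_adj s a : a.+1 < size s -> perm_eq (swap_adj s a) s.
Proof.
move=> /split_adj [p [y [z [q [-> <-]]]]]; rewrite swap_adj_cat perm_cat2l.
by rewrite -[y :: z :: q]/([:: y; z] ++ q) -[z :: y :: q]/([:: z; y] ++ q) perm_cat2r
  (perm_catC [:: z] [:: y]).
Qed.

Lemma perm_foldl_swap_adj s r : is_word (size s) r -> perm_eq (foldl swap_adj s r) s.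
Proof.
elim: r s => [|a r IHr] s //= /andP [ha hr].
apply: perm_trans (perm_swap_adj ha); apply: IHr.
by rewrite (perm_size (perm_swap_adj ha)).
Qed.

Lemma size_foldl_swap_adj s r : is_word (size s) r -> size (foldl swap_adj s r) = size s.
Proof. by move/perm_foldl_swap_adj/perm_size. Qed.

Ltac case_nth_eqs := repeat (case: eqP => /= ?);
  first [reflexivity | (exfalso; lia) | (congr (nth _ _ _); lia)].

Lemma swap_adj_commute s a b : (b + 2 <= a \/ a + 2 <= b) ->
  swap_adj (swap_adj s a) b = swap_adj (swap_adj s b) a.
Proof.
move=> hab; apply: (@eq_from_nth _ 0); first by rewrite !size_swap_adj; lia.
by move=> k _; rewrite !nth_swap_adj; case_nth_eqs.
Qed.

Lemma swap_adj_braid s a :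
  swap_adj (swap_adj (swap_adj s a) a.+1) a = swap_adj (swap_adj (swap_adj s a.+1) a) a.+1.
Proof.
apply: (@eq_from_nth _ 0); first by rewrite !size_swap_adj; lia.
by move=> k _; rewrite !nth_swap_adj; case_nth_eqs.
Qed.

Lemma swap_adj_map f s a : a.+1 < size s -> swap_adj (map f s) a = map f (swap_adj s a).
Proof.
move=> /split_adj [p [y [z [q [-> <-]]]]].
by rewrite swap_adj_cat !map_cat /= -(size_map f p) swap_adj_cat.
Qed.

Lemma foldl_swap_adj_map f s r : is_word (size s) r ->
  foldl swap_adj (map f s) r = map f (foldl swap_adj s r).
Proof.
elim: r s => [|a r IHr] s //= /andP [ha hr].
by rewrite swap_adj_map // IHr // size_swap_pos // ltnW.
Qed.

(** * Sequences of moves *)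

Lemma move_seq_cat u ks v ls t : move_seq u ks v -> move_seq v ls t -> move_seq u (ks ++ ls) t.
Proof. by elim=> [//|k ks' u' v' t' hs _ IHm] /IHm; apply: move_seq_cons hs. Qed.

Lemma move_step_frame k p q u v : move_step k u v -> move_step k (p ++ u ++ q) (p ++ v ++ q).
Proof.
case: k => /= [[p0 [q0 [a [b [hab [-> ->]]]]]] | [p0 [q0 [a h]]]].
  by exists (p ++ p0), (q0 ++ q), a, b; rewrite !catA -!(catA _ _ q) -!catA.
exists (p ++ p0), (q0 ++ q), a.
by case: h => [[-> ->]|[-> ->]]; [left|right]; rewrite !catA -!(catA _ _ q) -!catA.
Qed.

Lemma move_seq_frame p q u ks v : move_seq u ks v -> move_seq (p ++ u ++ q) ks (p ++ v ++ q).
Proof.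
elim=> [u'|k ks' u' v' t' hs _ IHm]; first exact: move_seq_nil.
exact: move_seq_cons (move_step_frame p q hs) IHm.
Qed.

Lemma move_seq_catl p u ks v : move_seq u ks v -> move_seq (p ++ u) ks (p ++ v).
Proof. by move/(move_seq_frame p [::]); rewrite !cats0. Qed.

Lemma move_seq_catr q u ks v : move_seq u ks v -> move_seq (u ++ q) ks (v ++ q).
Proof. exact: (move_seq_frame [::] q). Qed.

Lemma move_step_subset k u v : move_step k u v -> {subset v <= u}.
Proof.
case: k => /= [[p [q [a [b [_ [-> ->]]]]]] | [p [q [a [[-> ->]|[-> ->]]]]]] x;
  rewrite !mem_cat !inE; by do !case: eqP.
Qed.

Lemma is_word_move_step n k u v : move_step k u v -> is_word n u -> is_word n v.
Proof. by move=> /move_step_subset huv /allP hu; apply/allP => x /huv /hu. Qed.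

Lemma n_braids_cat ks ls : n_braids (ks ++ ls) = n_braids ks + n_braids ls.
Proof. exact: count_cat. Qed.

Lemma n_comms_cat ks ls : n_comms (ks ++ ls) = n_comms ks + n_comms ls.
Proof. exact: count_cat. Qed.

Lemma n_braids_nseq m : n_braids (nseq m Commutation) = 0.
Proof. by elim: m. Qed.

Lemma n_comms_nseq m : n_comms (nseq m Commutation) = m.
Proof. by elim: m => //= m ->. Qed.

(** * Parity invariants of moves *)

Fixpoint swapped_pairs (s r : seq nat) : seq (nat * nat) :=
  if r is a :: r' then (nth 0 s a, nth 0 s a.+1) :: swapped_pairs (swap_adj s a) r' else [::].

Lemma swapped_pairs_cat s p q :
  swapped_pairs s (p ++ q) = swapped_pairs s p ++ swapped_pairs (foldl swap_adj s p) q.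
Proof. by elim: p s => [|a p IHp] s //=; rewrite IHp. Qed.

Fixpoint count_pairs (T : Type) (R : rel T) (s : seq T) : nat :=
  if s is x :: s' then count (R x) s' + count_pairs R s' else 0.

Lemma count_pairs_swap T (R : rel T) p x y q :
  count_pairs R (p ++ x :: y :: q) + R y x = count_pairs R (p ++ y :: x :: q) + R x y.
Proof. by elim: p => [|z p IHp] /=; rewrite ?count_cat /=; lia. Qed.

Lemma count_pairs_rev3 T (R : rel T) p x y z q :
  count_pairs R (p ++ x :: y :: z :: q) + (R y x + R z x + R z y) =
  count_pairs R (p ++ z :: y :: x :: q) + (R x y + R x z + R y z).
Proof.
have h1 := count_pairs_swap R p x y (z :: q).
have h2 := count_pairs_swap R (rcons p y) x z q.
have h3 := count_pairs_swap R p y z (x :: q).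
by rewrite -cats1 -!catA /= in h2; lia.
Qed.

Lemma odd_shift a b x y : a + x = b + y -> odd b = odd a (+) odd (x + y).
Proof. by move/(congr1 odd); rewrite !oddD; do 4!case: odd. Qed.

Definition pair_disjoint (p q : nat * nat) : bool :=
  [&& p.1 != q.1, p.1 != q.2, p.2 != q.1 & p.2 != q.2].

Definition lex_lt (p q : nat * nat) : bool := (p.1 < q.1) || (p.1 == q.1) && (p.2 < q.2).

Definition disjoint_inversion (p q : nat * nat) : bool := pair_disjoint p q && lex_lt q p.

Definition meeting_inversion (p q : nat * nat) : bool := ~~ pair_disjoint p q && lex_lt q p.

Definition inversion_parity (R : rel (nat * nat)) (s u : seq nat) : bool :=
  odd (count_pairs R (swapped_pairs s u)).

Lemma lex_lt_total p q : p != q -> lex_lt p q + lex_lt q p = 1.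
Proof.
case: p q => [a b] [c d]; rewrite /lex_lt /= xpair_eqE.
by case: (ltngtP a c) => //= _; case: ltngtP.
Qed.

Lemma pair_disjointC p q : pair_disjoint p q = pair_disjoint q p.
Proof.
case: p q => [a b] [c d]; rewrite /pair_disjoint /=.
rewrite [c == a]eq_sym [c == b]eq_sym [d == a]eq_sym [d == b]eq_sym.
by case: (a == c); case: (a == d); case: (b == c); case: (b == d).
Qed.

Lemma pair_disjoint_neq p q : pair_disjoint p q -> p != q.
Proof. by apply: contraTneq => ->; rewrite /pair_disjoint eqxx. Qed.

Lemma swapped_pairs_window s p x q :
  swapped_pairs s (p ++ x ++ q) = swapped_pairs s p ++
    swapped_pairs (foldl swap_adj s p) x ++ swapped_pairs (foldl swap_adj s (p ++ x)) q.
Proof. by rewrite !swapped_pairs_cat foldl_cat. Qed.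

Lemma foldl_swap_adj_nth_neq (s : seq nat) p k l : uniq s -> is_word (size s) p ->
  k < size s -> l < size s -> k <> l ->
  nth 0 (foldl swap_adj s p) k != nth 0 (foldl swap_adj s p) l.
Proof.
move=> us hp hk hl /eqP; rewrite nth_uniq ?size_foldl_swap_adj //.
by rewrite (perm_uniq (perm_foldl_swap_adj hp)).
Qed.

Lemma inversion_parity_commutation (s : seq nat) p q a b :
  uniq s -> is_word (size s) (p ++ [:: a; b] ++ q) -> (b + 2 <= a \/ a + 2 <= b) ->
  inversion_parity disjoint_inversion s (p ++ [:: b; a] ++ q) =
    ~~ inversion_parity disjoint_inversion s (p ++ [:: a; b] ++ q) /\
  inversion_parity meeting_inversion s (p ++ [:: b; a] ++ q) =
    inversion_parity meeting_inversion s (p ++ [:: a; b] ++ q).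
Proof.
move=> us hw hab; have [hp ha hb] : [/\ is_word (size s) p, a.+1 < size s & b.+1 < size s].
  by move: hw; rewrite /is_word !all_cat /= => /and3P [-> /and3P [-> -> _] _].
set s' := foldl swap_adj s p.
have same_state : foldl swap_adj s (p ++ [:: b; a]) = foldl swap_adj s (p ++ [:: a; b]).
  by rewrite !foldl_cat /= (swap_adj_commute _ hab).
set P := (nth 0 s' a, nth 0 s' a.+1); set Q := (nth 0 s' b, nth 0 s' b.+1).
have hPQ : swapped_pairs s' [:: a; b] = [:: P; Q] /\ swapped_pairs s' [:: b; a] = [:: Q; P].
  by rewrite /= !nth_swap_adj; split; congr [:: _; (_, _)]; case_nth_eqs.
have dPQ : pair_disjoint P Q.
  by apply/and4P; split; apply: foldl_swap_adj_nth_neq; lia.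
rewrite /inversion_parity !swapped_pairs_window same_state -/s' (proj1 hPQ) (proj2 hPQ) /=.
have shift R := odd_shift (count_pairs_swap R (swapped_pairs s p) P Q
  (swapped_pairs (foldl swap_adj s (p ++ [:: a; b])) q)).
rewrite !shift /disjoint_inversion /meeting_inversion dPQ pair_disjointC dPQ /=.
by rewrite lex_lt_total ?pair_disjoint_neq //= addbT addbF.
Qed.

Lemma inversion_parity_braid (s : seq nat) p q a :
  uniq s -> is_word (size s) (p ++ [:: a; a.+1; a] ++ q) ->
  inversion_parity disjoint_inversion s (p ++ [:: a.+1; a; a.+1] ++ q) =
    inversion_parity disjoint_inversion s (p ++ [:: a; a.+1; a] ++ q) /\
  inversion_parity meeting_inversion s (p ++ [:: a.+1; a; a.+1] ++ q) =
    ~~ inversion_parity meeting_inversion s (p ++ [:: a; a.+1; a] ++ q).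
Proof.
move=> us hw; have [hp ha] : is_word (size s) p /\ a.+2 < size s.
  by move: hw; rewrite /is_word !all_cat /= => /and3P [-> /and4P [_ -> _ _] _].
set s' := foldl swap_adj s p.
have same_state :
    foldl swap_adj s (p ++ [:: a.+1; a; a.+1]) = foldl swap_adj s (p ++ [:: a; a.+1; a]).
  by rewrite !foldl_cat /= swap_adj_braid.
set x := nth 0 s' a; set y := nth 0 s' a.+1; set z := nth 0 s' a.+2.
have hxyz : swapped_pairs s' [:: a; a.+1; a] = [:: (x, y); (x, z); (y, z)] /\
            swapped_pairs s' [:: a.+1; a; a.+1] = [:: (y, z); (x, z); (x, y)].
  by rewrite /= !nth_swap_adj; split; congr [:: (_, _); (_, _); (_, _)]; case_nth_eqs.
have nxy : x != y by apply: foldl_swap_adj_nth_neq; lia.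
have nyz : y != z by apply: foldl_swap_adj_nth_neq; lia.
rewrite /inversion_parity !swapped_pairs_window same_state -/s' (proj1 hxyz) (proj2 hxyz) /=.
have shift R := odd_shift (count_pairs_rev3 R (swapped_pairs s p) (x, y) (x, z) (y, z)
  (swapped_pairs (foldl swap_adj s (p ++ [:: a; a.+1; a])) q)).
rewrite !shift /disjoint_inversion /meeting_inversion /pair_disjoint /= !eqxx /= !andbF /=.
split; first by rewrite addbF.
rewrite /lex_lt /= !eqxx !ltnn /= [y == x]eq_sym (negbTE nxy) /= !orbF.
by case: (ltngtP x y) nxy; case: (ltngtP y z) nyz; rewrite //= addbT.
Qed.

Lemma inversion_parity_move_step s k u v : uniq s -> is_word (size s) u -> move_step k u v ->
  inversion_parity disjoint_inversion s v =
    inversion_parity disjoint_inversion s u (+) is_comm k /\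
  inversion_parity meeting_inversion s v =
    inversion_parity meeting_inversion s u (+) is_braid k.
Proof.
move=> us hu; case: k => /= [[p [q [a [b [hab [eu ev]]]]]] | [p [q [a [[eu ev]|[eu ev]]]]]];
  rewrite ?addbT ?addbF eu ev; rewrite eu in hu.
- exact: inversion_parity_commutation.
- exact: inversion_parity_braid.
have hv : is_word (size s) (p ++ [:: a; a.+1; a] ++ q).
  by apply: (is_word_move_step (k := Braid)) hu; exists p, q, a; right.
by have [-> ->] := inversion_parity_braid us hv; rewrite negbK.
Qed.

Lemma inversion_parity_move_seq s u ks v : uniq s -> is_word (size s) u -> move_seq u ks v ->
  inversion_parity disjoint_inversion s v =
    inversion_parity disjoint_inversion s u (+) odd (n_comms ks) /\
  inversion_parity meeting_inversion s v =
    inversion_parity meeting_inversion s u (+) odd (n_braids ks).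
Proof.
move=> us hu hm; elim: hm hu => [u'|k ks' u' v' t' hs _ IHm] hu; first by rewrite !addbF.
have [d1 m1] := inversion_parity_move_step us hu hs.
have [d2 m2] := IHm (is_word_move_step hs hu).
rewrite /n_comms /n_braids /= !oddD d2 m2 d1 m1 -!addbA.
by case: k {hs d1 m1}.
Qed.

Lemma move_seq_parity_unique n u t fs gs : is_word n u -> move_seq u fs t -> move_seq u gs t ->
  odd (n_braids gs) = odd (n_braids fs) /\ odd (n_comms gs) = odd (n_comms fs).
Proof.
rewrite -[n in is_word n](size_iota 0 n) => hu hf hg.
have [df mf] := inversion_parity_move_seq (iota_uniq 0 n) hu hf.
have [dg mg] := inversion_parity_move_seq (iota_uniq 0 n) hu hg.
by split; [move: mf; rewrite mg | move: df; rewrite dg]; apply: addbI.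
Qed.

(** * Sliding a letter through descending runs *)

Definition desc (t L : nat) : seq nat := rev (iota t L).

Lemma mem_desc y t L : (y \in desc t L) = (t <= y < t + L).
Proof. by rewrite mem_rev mem_iota. Qed.

Lemma size_desc t L : size (desc t L) = L.
Proof. by rewrite size_rev size_iota. Qed.

Lemma desc_add t L1 L2 : desc t (L1 + L2) = desc (t + L1) L2 ++ desc t L1.
Proof. by rewrite /desc iotaD rev_cat. Qed.

Lemma desc_S t L : desc t L.+1 = (t + L) :: desc t L.
Proof. by rewrite -addn1 desc_add. Qed.

Lemma desc_split x t L : t <= x -> x + 2 <= t + L ->
  desc t L = desc (x + 2) (t + L - (x + 2)) ++ [:: x.+1; x] ++ desc t (x - t).
Proof.
move=> h1 h2; have {1}-> : L = (x - t) + 2 + (t + L - (x + 2)) by lia.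
rewrite !desc_add; have -> : t + (x - t + 2) = x + 2 by lia.
by have -> : t + (x - t) = x by lia.
Qed.

Lemma move_seq_commute_past x s : all (fun y => (y + 2 <= x) || (x + 2 <= y)) s ->
  move_seq (x :: s) (nseq (size s) Commutation) (rcons s x).
Proof.
elim: s => [|y s IHs] /=; first by constructor.
case/andP=> hy /IHs /(move_seq_catl [:: y]) hs.
apply: move_seq_cons hs; exists [::], s, x, y.
by split=> //; case/orP: hy => ?; [left|right]; lia.
Qed.

Lemma move_seq_braid_past x t L : t <= x -> x + 2 <= t + L ->
  exists ks, [/\ move_seq (x :: desc t L) ks (desc t L ++ [:: x.+1]),
    n_braids ks = 1 & n_comms ks = L - 2].
Proof.
move=> h1 h2; rewrite (desc_split h1 h2).
set H := desc (x + 2) _; set T := desc t (x - t).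
have cH : all (fun y => (y + 2 <= x) || (x + 2 <= y)) H.
  by apply/allP => y; rewrite mem_desc => /andP [? ?]; apply/orP; right.
have cT : all (fun y => (y + 2 <= x.+1) || (x.+1 + 2 <= y)) T.
  by apply/allP => y; rewrite mem_desc => /andP [? ?]; apply/orP; left; lia.
exists (nseq (size H) Commutation ++ Braid :: nseq (size T) Commutation); split.
- apply: move_seq_cat (move_seq_catr ([:: x.+1; x] ++ T) (move_seq_commute_past cH)) _.
  apply: (@move_seq_cons Braid _ _ (H ++ [:: x.+1; x; x.+1] ++ T)).
    by exists H, T, x; left; rewrite cat_rcons.
  have := move_seq_catl (H ++ [:: x.+1; x]) (move_seq_commute_past cT).
  by rewrite -!catA /= cats1.
- by rewrite n_braids_cat /= !n_braids_nseq.
- by rewrite n_comms_cat /= !n_comms_nseq !size_desc; lia.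
Qed.

Lemma move_seq_past_desc x y t L :
  (y = x /\ (t + L < x \/ x + 2 <= t)) \/ (y = x.+1 /\ t <= x /\ x + 2 <= t + L) ->
  exists ks, [/\ move_seq (x :: desc t L) ks (desc t L ++ [:: y]),
    x + n_braids ks = y & n_comms ks + 2 * n_braids ks = L].
Proof.
case=> [[-> hx] | [-> [h1 h2]]]; last first.
  have [ks [hm hb hc]] := move_seq_braid_past h1 h2.
  by exists ks; rewrite hb hc; split=> //; lia.
exists (nseq L Commutation); rewrite n_braids_nseq n_comms_nseq cats1; split; [|lia..].
have := @move_seq_commute_past x (desc t L); rewrite size_desc; apply.
by apply/allP => z; rewrite mem_desc => /andP [? ?]; apply/orP; lia.
Qed.

Definition desc_runs (L : nat -> nat) (k0 len : nat) : seq nat :=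
  flatten [seq desc k (L k) | k <- iota k0 len].

Lemma desc_runs_cons L k0 len :
  desc_runs L k0 len.+1 = desc k0 (L k0) ++ desc_runs L k0.+1 len.
Proof. by []. Qed.

Lemma desc_runsSr L k0 len :
  desc_runs L k0 len.+1 = desc_runs L k0 len ++ desc (k0 + len) (L (k0 + len)).
Proof. by rewrite /desc_runs -addn1 iotaD map_cat flatten_cat /= cats0. Qed.

Lemma move_seq_past_desc_runs (L f : nat -> nat) k0 len :
  (forall k, k0 <= k < k0 + len ->
     (f k.+1 = f k /\ (k + L k < f k \/ f k + 2 <= k)) \/
     (f k.+1 = (f k).+1 /\ k <= f k /\ f k + 2 <= k + L k)) ->
  exists ks, [/\ move_seq (f k0 :: desc_runs L k0 len) ks
      (desc_runs L k0 len ++ [:: f (k0 + len)]),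
    f k0 + n_braids ks = f (k0 + len) &
    n_comms ks + 2 * n_braids ks = \sum_(k0 <= k < k0 + len) L k].
Proof.
elim: len => [|len IHlen] hf.
  exists [::]; rewrite addn0 big_geq //.
  by split; [exact: (move_seq_nil [:: f k0]) | exact: addn0 |].
have [k hk|ks [hm hb hc]] := IHlen; first by apply: hf; lia.
have [ls [hm' hb' hc']] := move_seq_past_desc (hf (k0 + len) ltac:(lia)).
exists (ks ++ ls); split.
- rewrite desc_runsSr addnS; apply: move_seq_cat (move_seq_catr _ hm) _.
  by have := move_seq_catl (desc_runs L k0 len) hm'; rewrite -!catA.
- by rewrite n_braids_cat addnA hb hb' addnS.
- by rewrite addnS big_nat_recr ?leq_addr //= n_braids_cat n_comms_cat; lia.
Qed.

(** * Row words *)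

Lemma iota_cut k j n : k <= j < n ->
  iota k (n - k) = iota k (j - k) ++ j :: iota j.+1 (n - j.+1).
Proof.
move=> /andP [hkj hjn]; have {1}-> : n - k = (j - k) + (1 + (n - j.+1)) by lia.
by rewrite iotaD iotaD /= addn1 subnKC.
Qed.

Lemma iota0_cut x n : x < n -> iota 0 n = iota 0 x ++ x :: iota x.+1 (n - x.+1).
Proof. by move=> hx; have := @iota_cut 0 x n; rewrite !subn0; apply. Qed.

Lemma count_mem_iota (D : seq nat) z : uniq D ->
  count (mem D) (iota 0 z) = count (fun v => v < z) D.
Proof.
move=> uD; rewrite -!size_filter; apply/perm_size/uniq_perm.
- exact/filter_uniq/iota_uniq.
- exact: filter_uniq.
by move=> v; rewrite !mem_filter mem_iota /= andbC.
Qed.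

Lemma foldl_swap_adj_rotate A q x r :
  foldl swap_adj (A ++ q ++ x :: r) (desc (size A) (size q)) = A ++ x :: q ++ r.
Proof.
elim/last_ind: q r => [|q z IHq] r //.
rewrite size_rcons desc_S /= cat_rcons catA -(size_cat A q) swap_adj_cat -catA IHq.
by rewrite cat_rcons.
Qed.

Lemma foldl_swap_adj_exchange A q1 y q2 x r :
  foldl swap_adj (A ++ q1 ++ y :: q2 ++ x :: r)
    (desc (size A + size q1).+1 (size q2) ++ desc (size A) (size q1)) =
  A ++ y :: q1 ++ x :: q2 ++ r.
Proof.
have -> : (size A + size q1).+1 = size (A ++ q1 ++ [:: y]) by rewrite !size_cat /= addn1 addnS.
have -> : A ++ q1 ++ y :: q2 ++ x :: r = (A ++ q1 ++ [:: y]) ++ q2 ++ x :: r by rewrite -!catA.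
by rewrite foldl_cat foldl_swap_adj_rotate -!catA foldl_swap_adj_rotate.
Qed.

Definition swap_val (x y v : nat) : nat := if v == x then y else if v == y then x else v.

Lemma map_swap_val_id x y s : x \notin s -> y \notin s -> map (swap_val x y) s = s.
Proof.
move=> hx hy; rewrite -[RHS]map_id; apply/eq_in_map => v hv.
rewrite /swap_val; case: eqP hv => [-> | _]; first by rewrite (negbTE hx).
by case: eqP => // ->; rewrite (negbTE hy).
Qed.

Lemma map_swap_val_uniq A B C x y : uniq (A ++ x :: B ++ y :: C) ->
  map (swap_val x y) (A ++ x :: B ++ y :: C) = A ++ y :: B ++ x :: C.
Proof.
have perm_xy : perm_eq (A ++ x :: B ++ y :: C) (x :: y :: A ++ B ++ C).
  rewrite -cat1s perm_catCA /= perm_cons -cat1s catA perm_catCA /=.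
  by rewrite perm_cons catA.
rewrite (perm_uniq perm_xy) /= inE negb_or !mem_cat !negb_or.
case/and3P=> /andP [nxy /and3P [xA xB xC]] /and3P [yA yB yC] _.
by rewrite !(map_cat, map_cons) !map_swap_val_id // /swap_val eqxx eq_sym (negbTE nxy) eqxx.
Qed.

Lemma delete_at_size_cat A y B : delete_at (size A) (A ++ y :: B) = A ++ B.
Proof. by rewrite /delete_at take_size_cat // -cat_rcons drop_size_cat // size_rcons. Qed.

Lemma delete_at_catl s t I : I < size s -> delete_at I (s ++ t) = delete_at I s ++ t.
Proof.
move=> hI; rewrite /delete_at take_cat hI drop_cat -catA; case: ltnP => // hs.
by rewrite (_ : I.+1 = size s) ?subnn ?drop0 ?drop_size //; lia.
Qed.

Lemma delete_at_catr s t I : size s <= I -> delete_at I (s ++ t) = s ++ delete_at (I - size s) t.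
Proof.
move=> hI; rewrite /delete_at take_cat drop_cat ltnNge hI ltnNge ltnW //= catA.
by rewrite subSn.
Qed.

Lemma delete_at_desc t L e : e < L ->
  delete_at e (desc t L) = desc (t + L - e) e ++ desc t (L - e - 1).
Proof.
move=> he; have {1}-> : L = (L - e - 1) + 1 + e by lia.
rewrite !desc_add -[X in delete_at X _](size_desc (t + (L - e - 1 + 1)) e).
by rewrite [desc _ 1]/desc /= delete_at_size_cat; congr (desc _ _ ++ _); lia.
Qed.

Lemma delete_at_flatten (ss : seq (seq nat)) I : I < size (flatten ss) ->
  exists m e, [/\ m < size ss, e < size (nth [::] ss m), I = size (flatten (take m ss)) + e &
    delete_at I (flatten ss) =
      flatten (take m ss) ++ delete_at e (nth [::] ss m) ++ flatten (drop m.+1 ss)].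
Proof.
elim: ss I => [|s ss IHss] I //=; rewrite size_cat => hI.
case: (ltnP I (size s)) => hs.
  by exists 0, I; rewrite drop0 delete_at_catl.
have [|m [e [hm he hIe hdel]]] := IHss (I - size s); first lia.
exists m.+1, e; split=> //=; first by rewrite size_cat; lia.
by rewrite delete_at_catr // hdel catA.
Qed.

Definition row_block (p : seq nat) (m : nat) : seq nat := desc m (code p m).

Section RowWord.

Variables (n : nat) (p : seq nat).
Hypothesis hp : is_perm n p.

Lemma is_perm_size : size p = n.
Proof. by rewrite (perm_size hp) size_iota. Qed.

Lemma is_perm_uniq : uniq p.
Proof. by rewrite (perm_uniq hp) iota_uniq. Qed.

Lemma is_perm_mem v : (v \in p) = (v < n).
Proof. by rewrite (perm_mem hp) mem_iota. Qed.

Lemma is_perm_nth_lt k : k < n -> nth 0 p k < n.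
Proof. by move=> hk; rewrite -is_perm_mem mem_nth // is_perm_size. Qed.

Lemma is_perm_nth_eq k l : k < n -> l < n -> (nth 0 p k == nth 0 p l) = (k == l).
Proof. by move=> hk hl; rewrite nth_uniq ?is_perm_size ?is_perm_uniq. Qed.

Lemma row_wordE : row_word p = flatten [seq row_block p m | m <- iota 0 n].
Proof. by rewrite /row_word is_perm_size. Qed.

Lemma code_le k : code p k <= n - k.+1.
Proof. by rewrite /code is_perm_size; apply: leq_trans (count_size _ _) _; rewrite size_iota. Qed.

Lemma is_word_row_blocks (s : seq nat) : all (fun k => k < n) s ->
  is_word n (flatten [seq row_block p k | k <- s]).
Proof.
elim: s => [|k s IHs] //= /andP [hk /IHs hs]; rewrite /is_word all_cat; apply/andP; split=> //.
apply/allP => y; rewrite mem_desc => /andP [_ hy]; have := code_le k; lia.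
Qed.

Definition unplaced (m v : nat) : bool := v \notin take m p.

Definition row_state (m : nat) : seq nat := take m p ++ [seq v <- iota 0 n | unplaced m v].

Definition unplaced_below (m : nat) : seq nat :=
  [seq v <- iota 0 (nth 0 p m) | unplaced m v].

Definition unplaced_above (m : nat) : seq nat :=
  [seq v <- iota (nth 0 p m).+1 (n - (nth 0 p m).+1) | unplaced m v].

Lemma unplacedE m v : v < n -> unplaced m v = (v \in drop m p).
Proof.
move=> hv; have hdisj : ~~ has (mem (take m p)) (drop m p).
  by have := is_perm_uniq; rewrite -{1}(cat_take_drop m p) cat_uniq => /and3P [].
have : v \in take m p ++ drop m p by rewrite cat_take_drop is_perm_mem.
rewrite /unplaced mem_cat => /orP [h|h]; rewrite h /=.
- by apply/esym/negP => h'; move/hasP: hdisj; apply; exists v.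
- by apply/negP => h'; move/hasP: hdisj; apply; exists v.
Qed.

Lemma unplaced_nth m : m < n -> unplaced m (nth 0 p m).
Proof.
by move=> hm; rewrite unplacedE ?is_perm_nth_lt // (drop_nth 0) ?is_perm_size ?mem_head.
Qed.

Lemma count_unplaced m z : m <= n -> z <= n ->
  count (unplaced m) (iota 0 z) = count (fun l => nth 0 p l < z) (iota m (n - m)).
Proof.
move=> hm hz; rewrite (@eq_in_count _ _ (mem (drop m p))); last first.
  by move=> v; rewrite mem_iota => /andP [_ hv]; apply: unplacedE; lia.
rewrite count_mem_iota ?drop_uniq ?is_perm_uniq //.
rewrite -(count_map (nth 0 p) (fun v => v < z)) map_nth_iota ?is_perm_size //.
by rewrite take_oversize // size_drop is_perm_size.
Qed.

Lemma size_unplaced_below m : m < n -> size (unplaced_below m) = code p m.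
Proof.
move=> hm; rewrite size_filter count_unplaced 1?ltnW ?is_perm_nth_lt //.
by rewrite -(subnSK hm) /= ltnn add0n /code is_perm_size.
Qed.

Lemma row_state_split m : m < n ->
  row_state m = take m p ++ unplaced_below m ++ nth 0 p m :: unplaced_above m.
Proof.
move=> hm; rewrite /row_state (iota0_cut (is_perm_nth_lt hm)) filter_cat /=.
by rewrite unplaced_nth.
Qed.

Lemma row_state_next m : m < n ->
  row_state m.+1 = take m p ++ nth 0 p m :: unplaced_below m ++ unplaced_above m.
Proof.
move=> hm; set x := nth 0 p m.
have take_next : take m.+1 p = rcons (take m p) x by rewrite (take_nth 0) ?is_perm_size.
have unplacedS v : unplaced m.+1 v = (v != x) && unplaced m v.
  by rewrite /unplaced take_next mem_rcons inE negb_or.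
rewrite /row_state take_next (iota0_cut (is_perm_nth_lt hm)) filter_cat /= unplacedS eqxx.
rewrite cat_rcons; congr (_ ++ _ :: _ ++ _); apply: eq_in_filter => v;
  rewrite mem_iota unplacedS => /andP [hv1 hv2]; rewrite (_ : v != x) // neq_ltn; apply/orP; lia.
Qed.

Lemma foldl_row_block m : m < n -> foldl swap_adj (row_state m) (row_block p m) = row_state m.+1.
Proof.
move=> hm; rewrite row_state_split // row_state_next // /row_block -size_unplaced_below //.
have size_take_m : size (take m p) = m by rewrite size_takel // is_perm_size ltnW.
by rewrite -[X in desc X _]size_take_m foldl_swap_adj_rotate.
Qed.

Lemma foldl_row_blocks m : m <= n ->
  foldl swap_adj (iota 0 n) (flatten [seq row_block p k | k <- iota 0 m]) = row_state m.
Proof.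
elim: m => [|m IHm] hm.
  rewrite /row_state /= take0 (@eq_in_filter _ _ predT) ?filter_predT // => v _.
  by rewrite /unplaced take0.
rewrite -addn1 iotaD map_cat flatten_cat foldl_cat IHm 1?ltnW //= cats0 add0n addn1.
exact: foldl_row_block.
Qed.

Lemma row_state_n : row_state n = p.
Proof.
rewrite /row_state take_oversize ?is_perm_size // (@eq_in_filter _ _ pred0) ?filter_pred0 ?cats0 //.
by move=> v; rewrite mem_iota /unplaced take_oversize ?is_perm_size // is_perm_mem /= => ->.
Qed.

Lemma is_word_row_blocks_iota m len : m + len <= n ->
  is_word n (flatten [seq row_block p k | k <- iota m len]).
Proof. by move=> h; apply: is_word_row_blocks; apply/allP => k; rewrite mem_iota; lia. Qed.

Lemma size_row_state m : m <= n -> size (row_state m) = n.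
Proof.
move=> hm; rewrite -foldl_row_blocks // size_foldl_swap_adj size_iota //.
exact: is_word_row_blocks_iota.
Qed.

Lemma foldl_row_blocks_from m : m <= n ->
  foldl swap_adj (row_state m) (flatten [seq row_block p k | k <- iota m (n - m)]) = p.
Proof.
move=> hm; rewrite -foldl_row_blocks // -foldl_cat -flatten_cat -map_cat -iotaD subnKC //.
by rewrite foldl_row_blocks // row_state_n.
Qed.

Lemma uniq_row_state m : m <= n -> uniq (row_state m).
Proof.
move=> hm; rewrite -foldl_row_blocks // (perm_uniq (perm_foldl_swap_adj _)) ?iota_uniq //.
by rewrite size_iota; apply: is_word_row_blocks_iota.
Qed.

Lemma foldl_delete_row_block m e : m < n -> e < code p m ->
  foldl swap_adj (row_state m) (delete_at e (row_block p m)) =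
  map (swap_val (nth 0 p m) (nth 0 (unplaced_below m) (code p m - e - 1))) (row_state m.+1).
Proof.
move=> hm he; have := uniq_row_state hm.
rewrite (row_state_split hm) (row_state_next hm) /row_block delete_at_desc //.
set A := take m p; set q := unplaced_below m; set x := nth 0 p m.
have size_A : size A = m by rewrite size_takel // is_perm_size ltnW.
have size_q : size q = code p m := size_unplaced_below hm.
set y := nth 0 q (code p m - e - 1).
have -> : q = take (code p m - e - 1) q ++ y :: drop (code p m - e) q.
  rewrite -{1}(cat_take_drop (code p m - e - 1) q) (drop_nth 0) ?size_q; last by lia.
  by rewrite (_ : (code p m - e - 1).+1 = code p m - e) //; lia.
set q1 := take _ q; set q2 := drop _ q => u.
have size_q1 : size q1 = code p m - e - 1 by rewrite size_takel //; lia.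
have size_q2 : size q2 = e by rewrite size_drop; lia.
move: u; rewrite -!catA /= => u; rewrite map_swap_val_uniq //.
rewrite (_ : m + code p m - e = (size A + size q1).+1); last by lia.
by rewrite -[X in desc X (code p m - e - 1)]size_A -size_q1 -size_q2 foldl_swap_adj_exchange.
Qed.

Lemma word_perm_delete_row_word I : I < size (row_word p) ->
  exists m e, [/\ m < n, e < code p m,
    I = size (flatten [seq row_block p k | k <- iota 0 m]) + e &
    word_perm n (delete_at I (row_word p)) =
      map (swap_val (nth 0 p m) (nth 0 (unplaced_below m) (code p m - e - 1))) p].
Proof.
rewrite row_wordE // => /delete_at_flatten [m [e []]]; rewrite size_map size_iota => hm.
rewrite -map_take -map_drop take_iota drop_iota (minn_idPl (ltnW hm)).
rewrite (nth_map 0) ?size_iota // nth_iota // /row_block size_desc => he hI hdel.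
exists m, e; split=> //.
rewrite word_permE hdel 2!foldl_cat foldl_row_blocks 1?ltnW // foldl_delete_row_block //.
rewrite foldl_swap_adj_map ?foldl_row_blocks_from ?size_row_state //; try lia.
by apply: is_word_row_blocks_iota; lia.
Qed.

End RowWord.

(** * A Bruhat cover *)

Definition transp (i j k : nat) : nat := if k == j then i else if k == i then j else k.

Lemma transpK i j : involutive (transp i j).
Proof. by move=> k; rewrite /transp; do !case: eqP => //=; congruence. Qed.

Lemma nth_swap_pos_transp s i j k : nth 0 (swap_pos s i j) k = nth 0 s (transp i j k).
Proof. by rewrite nth_swap_pos /transp; case: eqP => // _; case: eqP. Qed.

Lemma is_perm_swap_pos n s i j : is_perm n s -> i < n -> j < n -> is_perm n (swap_pos s i j).
Proof.
move=> hs hi hj; have size_s := is_perm_size hs.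
have size_w : size (swap_pos s i j) = n by rewrite size_swap_pos size_s.
have transp_lt k : k < n -> transp i j k < n by rewrite /transp; do !case: eqP => // _.
apply: uniq_perm (iota_uniq 0 n) _.
  apply/(uniqP 0) => k l; rewrite !inE size_w => hk hl.
  rewrite !nth_swap_pos_transp => /eqP.
  rewrite nth_uniq ?size_s ?transp_lt ?(is_perm_uniq hs) //.
  by move/eqP/(congr1 (transp i j)); rewrite !transpK.
move=> x; rewrite mem_iota /=; apply/idP/idP.
  case/(nthP 0) => k hk <-; rewrite nth_swap_pos_transp -(is_perm_mem hs) mem_nth //.
  by rewrite size_s transp_lt // -size_w.
rewrite -(is_perm_mem hs) => /(nthP 0) [k hk <-]; rewrite -(transpK i j k) -nth_swap_pos_transp.
by apply: mem_nth; rewrite size_w transp_lt // -size_s.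
Qed.

Section Cover.

Variables (n : nat) (w' : seq nat) (i j : nat).
Hypothesis hp : is_perm n w'.
Hypothesis hij : i < j.
Hypothesis hjn : j < n.
Hypothesis hlt : nth 0 w' i < nth 0 w' j.
Hypothesis hcov : forall k, i < k < j -> ~ (nth 0 w' i < nth 0 w' k < nth 0 w' j).

Local Notation w := (swap_pos w' i j).
Local Notation A := (nth 0 w' i).
Local Notation B := (nth 0 w' j).

Lemma is_perm_w : is_perm n w.
Proof. by apply: is_perm_swap_pos => //; lia. Qed.

Lemma size_w : size w = n.
Proof. exact: is_perm_size is_perm_w. Qed.

Lemma nth_w_i : nth 0 w i = B.
Proof. by rewrite nth_swap_pos (ltn_eqF hij) eqxx. Qed.

Lemma nth_w_j : nth 0 w j = A.
Proof. by rewrite nth_swap_pos eqxx. Qed.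

Lemma nth_w_other k : k <> i -> k <> j -> nth 0 w k = nth 0 w' k.
Proof. by move=> /eqP/negbTE hki /eqP/negbTE hkj; rewrite nth_swap_pos hki hkj. Qed.

Lemma count_w_w' (P : pred nat) a b : (forall l, a <= l < a + b -> l <> i /\ l <> j) ->
  count (fun l => P (nth 0 w l)) (iota a b) = count (fun l => P (nth 0 w' l)) (iota a b).
Proof.
by move=> h; apply: eq_in_count => l; rewrite mem_iota => /h [hli hlj]; rewrite nth_w_other.
Qed.

Lemma nth_w'_neq k : k < n -> k <> i -> k <> j -> nth 0 w' k <> A /\ nth 0 w' k <> B.
Proof. by move=> hk /eqP hki /eqP hkj; split; apply/eqP; rewrite (is_perm_nth_eq hp) //; lia. Qed.

Lemma nth_w'_between k : i < k < j -> nth 0 w' k < A \/ B < nth 0 w' k.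
Proof. by move=> hk; have [] := nth_w'_neq (k := k) _ _ _; have := hcov hk; lia. Qed.

Lemma code_w_other k : k < n -> k <> i -> k <> j -> code w k = code w' k.
Proof.
move=> hk hki hkj; rewrite /code size_w (is_perm_size hp) nth_w_other //.
set x := nth 0 w' k.
case: (ltnP j k) => hjk; first by apply: (count_w_w' (fun y => y < x)) => l; lia.
rewrite (@iota_cut k.+1 j n) ?count_cat /= ?nth_w_j; last lia.
rewrite (count_w_w' (fun y => y < x) (a := j.+1)); last by move=> l; lia.
case: (ltnP i k) => hik.
  rewrite (count_w_w' (fun y => y < x) (a := k.+1)); last by move=> l; lia.
  by have := nth_w'_between (k := k) ltac:(lia); lia.
rewrite (@iota_cut k.+1 i j) ?count_cat /= ?nth_w_i; last lia.
rewrite (count_w_w' (fun y => y < x) (a := k.+1)); last by move=> l; lia.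
by rewrite (count_w_w' (fun y => y < x) (a := i.+1)); [lia | move=> l; lia].
Qed.

Let d := count (fun l => A < nth 0 w' l < B) (iota j.+1 (n - j.+1)).

Lemma count_lt_B_after_j : count (fun l => nth 0 w' l < B) (iota j.+1 (n - j.+1)) =
  count (fun l => nth 0 w' l < A) (iota j.+1 (n - j.+1)) + d.
Proof.
rewrite /d -count_predUI (@eq_in_count _ (predI _ _) pred0) ?count_pred0 ?addn0; last first.
  by move=> l _ /=; case: ltngtP.
apply: eq_in_count => l; rewrite mem_iota => hl /=.
by have [] := nth_w'_neq (k := l) _ _ _; lia.
Qed.

Lemma code_w'_j : code w' j = code w j + d.
Proof.
rewrite /code size_w (is_perm_size hp) nth_w_j count_lt_B_after_j.
by rewrite (count_w_w' (fun y => y < A)) // => l; lia.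
Qed.

Lemma code_w_i : code w i = code w' i + 1 + d.
Proof.
rewrite /code size_w (is_perm_size hp) nth_w_i.
rewrite (@iota_cut i.+1 j n) ?count_cat /= ?nth_w_j; last lia.
rewrite (count_w_w' (fun y => y < B) (a := i.+1)); last by move=> l; lia.
rewrite (count_w_w' (fun y => y < B) (a := j.+1)); last by move=> l; lia.
rewrite count_lt_B_after_j hlt (leq_gtF (ltnW hlt)) /=.
have -> : count (fun l => nth 0 w' l < B) (iota i.+1 (j - i.+1)) =
          count (fun l => nth 0 w' l < A) (iota i.+1 (j - i.+1)).
  apply: eq_in_count => l; rewrite mem_iota => hl.
  by have := nth_w'_between (k := l) ltac:(lia); lia.
lia.
Qed.

Let below_A k := count (fun l => nth 0 w' l < A) (iota k (n - k)).

Lemma below_AS k : k < n -> below_A k = (nth 0 w' k < A) + below_A k.+1.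
Proof. by move=> hk; rewrite /below_A -(subnSK hk). Qed.

Lemma below_A_i : below_A i.+1 = code w' i.
Proof. by rewrite /below_A /code (is_perm_size hp). Qed.

Lemma below_A_j : below_A j = code w j.
Proof.
rewrite below_AS // (leq_gtF (ltnW hlt)) /= /code size_w nth_w_j.
by rewrite (count_w_w' (fun y => y < A)) // => l; lia.
Qed.

Lemma code_lt_below_A k : i < k < j -> nth 0 w' k < A -> code w' k < below_A k.
Proof.
move=> hk hA; rewrite below_AS ?hA; last lia.
rewrite /code (is_perm_size hp) add1n ltnS; apply: sub_count => l /= hl.
exact: ltn_trans hl hA.
Qed.

Lemma below_A_lt_code k : i < k < j -> B < nth 0 w' k -> below_A k.+1 + d < code w' k.
Proof.
move=> hk hB; rewrite /below_A /code (is_perm_size hp).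
rewrite (@iota_cut k.+1 j n) ?count_cat /=; last lia.
rewrite hB (leq_gtF (ltnW hlt)) /=.
have below_k : count (fun l => nth 0 w' l < A) (iota k.+1 (j - k.+1)) <=
               count (fun l => nth 0 w' l < nth 0 w' k) (iota k.+1 (j - k.+1)).
  by apply: sub_count => l /= hl; apply: ltn_trans hl (ltn_trans hlt hB).
have after_j : count (fun l => nth 0 w' l < B) (iota j.+1 (n - j.+1)) <=
               count (fun l => nth 0 w' l < nth 0 w' k) (iota j.+1 (n - j.+1)).
  by apply: sub_count => l /= hl; apply: ltn_trans hl hB.
by rewrite count_lt_B_after_j in after_j; lia.
Qed.

Let c := i + code w' i.
Let e := j + code w j.
Let mid := desc_runs (code w') i (j - i).
Let sum_mid := \sum_(i <= k < j) code w' k.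

Lemma move_seq_letter_past_mid m : m < d ->
  exists ks, [/\ move_seq ((c + m.+1) :: mid) ks (mid ++ [:: e + m]),
    c + 1 + n_braids ks = e & n_comms ks + 2 * n_braids ks = sum_mid].
Proof.
move=> hm.
have skip_i : c + m.+1 = c + m.+1 /\ (i + code w' i < c + m.+1 \/ c + m.+1 + 2 <= i).
  by split=> //; left; rewrite /c; lia.
have [ks0 [h0 b0 c0]] := move_seq_past_desc (or_introl skip_i).
(* The letter [c + m.+1] enters the row block of position [k] as [f k]. *)
pose f k := k + below_A k + m.
have [k hk|ks1 [h1 b1 c1]] := @move_seq_past_desc_runs (code w') f i.+1 (j - i.+1).
  have hk' : i < k < j by lia.
  have hAk : below_A k = (nth 0 w' k < A) + below_A k.+1 by apply: below_AS; lia.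
  rewrite /f; case: (nth_w'_between hk') => h.
    by have := code_lt_below_A hk' h; rewrite h in hAk; left; lia.
  have := below_A_lt_code hk' h; rewrite (leq_gtF (ltnW (ltn_trans hlt h))) in hAk.
  by right; lia.
have f_first : f i.+1 = c + m.+1 by rewrite /f below_A_i /c; lia.
have f_last : f (i.+1 + (j - i.+1)) = e + m by rewrite subnKC // /f below_A_j.
rewrite f_first f_last in h1 b1.
exists (ks0 ++ ks1); split.
- rewrite /mid -(subnSK hij) desc_runs_cons.
  apply: move_seq_cat (move_seq_catr _ h0) _.
  by have := move_seq_catl (desc i (code w' i)) h1; rewrite -!catA.
- by rewrite n_braids_cat; lia.
- by rewrite subnKC // in c1; rewrite /sum_mid big_ltn // n_braids_cat n_comms_cat; lia.
Qed.

Lemma move_seq_letters_past_mid m : m <= d ->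
  exists ks, [/\ move_seq (desc (c + 1) m ++ mid) ks (mid ++ desc e m),
    n_braids ks + m * (c + 1) = m * e & n_comms ks + 2 * n_braids ks = m * sum_mid].
Proof.
elim: m => [|m IHm] hm.
  by exists [::]; rewrite /desc /= cats0; split=> //; exact: move_seq_nil.
have [ks [hks bks cks]] := IHm (ltnW hm).
have [ls [hls bls cls]] := move_seq_letter_past_mid hm.
exists (ks ++ ls); split.
- rewrite !desc_S (_ : c + 1 + m = c + m.+1); last lia.
  apply: move_seq_cat (move_seq_catl [:: c + m.+1] hks) _.
  by have := move_seq_catr (desc e m) hls; rewrite -!catA.
- by rewrite n_braids_cat !mulSn; lia.
- by rewrite n_braids_cat n_comms_cat mulSn; lia.
Qed.

Lemma unplaced_w_A : unplaced w i A.
Proof.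
rewrite (unplacedE is_perm_w); last by apply: (is_perm_nth_lt hp); lia.
apply/(nthP 0); exists (j - i).
  by rewrite size_drop size_w; lia.
by rewrite nth_drop subnKC 1?ltnW // nth_w_j.
Qed.

Lemma index_A_unplaced_below_w : index A (unplaced_below w i) = code w' i.
Proof.
rewrite /unplaced_below nth_w_i (iota0_cut hlt) filter_cat index_cat /= unplaced_w_A.
rewrite mem_filter mem_iota add0n ltnn !andbF /= eqxx addn0 size_filter.
have A_le_n : A <= n by apply/ltnW/(is_perm_nth_lt hp); lia.
rewrite (count_unplaced is_perm_w _ A_le_n); last lia.
rewrite -(subnSK (ltn_trans hij hjn)) /=.
rewrite nth_w_i (leq_gtF (ltnW hlt)) /= /code (is_perm_size hp).
apply: eq_in_count => l; rewrite mem_iota => hl.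
have [-> | /eqP hlj] := eqVneq l j; first by rewrite nth_w_j ltnn (leq_gtF (ltnW hlt)).
by rewrite nth_w_other //; lia.
Qed.

Let pre := flatten [seq row_block w' k | k <- iota 0 i].
Let post := flatten [seq row_block w' k | k <- iota j.+1 (n - j.+1)].

Lemma row_blocks_w (s : seq nat) : {in s, forall k, [/\ k < n, k <> i & k <> j]} ->
  [seq row_block w k | k <- s] = [seq row_block w' k | k <- s].
Proof. by move=> hs; apply/eq_in_map => k /hs [hk hki hkj]; rewrite /row_block code_w_other. Qed.

Lemma row_blocks_w_pre : flatten [seq row_block w k | k <- iota 0 i] = pre.
Proof. by rewrite row_blocks_w // => k; rewrite mem_iota => hk; split; lia. Qed.

Lemma deleted_index I : I < size (row_word w) ->
  word_perm n (delete_at I (row_word w)) = w' -> I = size pre + d.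
Proof.
move=> hI hwv; have [m [e0 [hm he0 hIe hperm]]] := word_perm_delete_row_word is_perm_w hI.
rewrite hwv in hperm; set Y := nth 0 (unplaced_below w m) _ in hperm.
have Y_in : Y \in unplaced_below w m.
  by apply: mem_nth; rewrite (size_unplaced_below is_perm_w); lia.
have Y_lt : Y < nth 0 w m by move: Y_in; rewrite mem_filter mem_iota => /andP [_ /andP [_]].
have vm : nth 0 w' m = Y by rewrite hperm (nth_map 0) ?size_w // /swap_val eqxx.
have m_i : m = i.
  apply/eqP; apply: contraT => /eqP hmi; have [m_j | /eqP hmj] := eqVneq m j.
    by move: Y_lt; rewrite -vm m_j nth_w_j; lia.
  by move: Y_lt; rewrite -vm nth_w_other // ltnn.
subst m; have : index Y (unplaced_below w i) = code w i - e0 - 1.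
  rewrite index_uniq ?(size_unplaced_below is_perm_w) ?filter_uniq ?iota_uniq //; lia.
rewrite code_w_i in he0.
by rewrite hIe -vm index_A_unplaced_below_w row_blocks_w_pre code_w_i; lia.
Qed.

Lemma iota_cover : iota 0 n = iota 0 i ++ iota i (j - i) ++ j :: iota j.+1 (n - j.+1).
Proof.
rewrite (iota0_cut hjn) catA; congr (_ ++ _).
by rewrite -{1}(subnKC (ltnW hij)) iotaD.
Qed.

Lemma row_word_w' : row_word w' = pre ++ mid ++ desc e d ++ desc j (code w j) ++ post.
Proof.
rewrite (row_wordE hp) iota_cover !map_cat !flatten_cat /= {3}/row_block code_w'_j desc_add.
by rewrite -!catA.
Qed.

Lemma delete_row_word_w : delete_at (size pre + d) (row_word w) =
  pre ++ desc (c + 1) d ++ mid ++ desc j (code w j) ++ post.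
Proof.
rewrite (row_wordE is_perm_w) iota_cover -(subnSK hij) !map_cat !flatten_cat /=.
have d_lt : d < size (row_block w i) by rewrite /row_block size_desc code_w_i; lia.
rewrite row_blocks_w_pre delete_at_catr ?leq_addr // addKn.
rewrite delete_at_catl ?size_cat ?(ltn_addr _ d_lt) // delete_at_catl //.
rewrite /row_block delete_at_desc ?code_w_i; last lia.
rewrite !row_blocks_w; last 2 first.
- by move=> k; rewrite mem_iota => hk; split; lia.
- by move=> k; rewrite mem_iota => hk; split; lia.
rewrite /c /mid -(subnSK hij) desc_runs_cons -!catA.
have -> : i + (code w' i + 1 + d) - d = i + code w' i + 1 by lia.
by have -> : code w' i + 1 + d - d - 1 = code w' i by lia.
Qed.

Lemma cover_move_seq I : I < size (row_word w) -> word_perm n (delete_at I (row_word w)) = w' ->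
  exists fs, [/\ move_seq (delete_at I (row_word w)) fs (row_word w'),
    code w' i < code w i,
    n_braids fs + (code w i - code w' i - 1) * (i + code w' i + 1) =
      (code w i - code w' i - 1) * (j + code w j) &
    n_comms fs + 2 * n_braids fs = (code w i - code w' i - 1) * \sum_(i <= k < j) code w' k].
Proof.
move=> hI hwv; have [fs [hfs bfs cfs]] := move_seq_letters_past_mid (leqnn d).
have -> : code w i - code w' i - 1 = d by rewrite code_w_i; lia.
exists fs; split=> //; last by rewrite code_w_i; lia.
rewrite (deleted_index hI hwv) delete_row_word_w row_word_w'.
by have := move_seq_frame pre (desc j (code w j) ++ post) hfs; rewrite -!catA.
Qed.

End Cover.

Unset Implicit Arguments.
Local Open Scope ring_scope.

Theorem proposition4p3 (n : nat) (w w' : seq nat) (i j I : nat) :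
  is_perm n w' ->
  (i < j)%N -> (j < n)%N ->
  (nth 0 w' i < nth 0 w' j)%N ->
  (forall k, (i < k < j)%N -> ~ (nth 0 w' i < nth 0 w' k < nth 0 w' j)%N) ->
  w = swap_pos w' i j ->
  (I < size (row_word w))%N ->
  reduced_word n (delete_at I (row_word w)) w' ->
  exists fs : seq move_kind,
    move_seq (delete_at I (row_word w)) fs (row_word w') /\
    (n_braids fs)%:Z =
      ((code w i)%:Z - (code w' i)%:Z - 1) *
      ((j%:Z - i%:Z - 1) + (code w j)%:Z - (code w' i)%:Z) /\
    (n_comms fs)%:Z =
      ((code w i)%:Z - (code w' i)%:Z - 1) *
      ((\sum_(i <= k < j) (code w' k)%:Z) -
        2 * ((j%:Z - i%:Z - 1) + (code w j)%:Z - (code w' i)%:Z)) /\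
    (forall gs : seq move_kind,
       move_seq (delete_at I (row_word w)) gs (row_word w') ->
       odd (n_braids gs) = odd (n_braids fs) /\
       odd (n_comms gs) = odd (n_comms fs)).
Proof.
move=> hp hij hjn hlt hcov -> hI [hword [hperm _]].
have [fs [hfs hcode hb hc]] := cover_move_seq hp hij hjn hlt hcov hI hperm.
set D := (code _ i - code w' i - 1)%N in hb hc.
have -> : (code (swap_pos w' i j) i)%:Z - (code w' i)%:Z - 1 = D%:Z by rewrite /D; lia.
rewrite -(big_morph Posz PoszD (erefl 0%:Z)).
exists fs; split=> //; split; first by lia.
split; first by lia.
by move=> gs hgs; apply: move_seq_parity_unique hword hfs hgs.
Qed.
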